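(* Let $q>0$, $n\ge1$, and let $(p_m)_{m\ge1}$ be the $q$-Mallows process. Then each of the following random permutations of $\{1,\dots,n\}$ is distributed as $\mu_{n,q}$: (i) $\pi(i)=p_n(n+1-i)$; (ii) $\pi(i)=n+1-p_n^{-1}(i)$; (iii) $\pi(i)=p_n^{-1}(n+1-i)$; (iv) $\pi(i)=n+1-p_n(i)$.
   Context: For $q>0$ and $n\ge1$, $\mu_{n,q}(\pi)=q^{\mathrm{inv}(\pi)}/Z_{n,q}$ on $S_n$, with $\mathrm{inv}(\pi)$ the number of pairs $i<j$ with $\pi(i)>\pi(j)$ and $Z_{n,q}$ a normalizing constant. The $q$-Mallows process is the sequence of random permutations $p_n\in S_n$ defined as follows: let $(p_n(n))_{n\ge1}$ be independent with $\mathbb{P}(p_n(n)=j)=\frac{q^{j-1}}{1+q+\dots+q^{n-1}}$ for $1\le j\le n$; $p_1$ is the unique permutation of $\{1\}$, and for $n\ge2$, $p_n$ takes the value $p_n(n)$ at $n$ and, for $1\le i\le n-1$, $p_n(i)=p_{n-1}(i)$ if $p_{n-1}(i)<p_n(n)$ and $p_n(i)=p_{n-1}(i)+1$ otherwise. *)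

From mathcomp Require Import all_boot all_order all_fingroup all_algebra.
Set Implicit Arguments. Unset Strict Implicit. Unset Printing Implicit Defensive.
Import Order.TTheory GRing.Theory Num.Theory.

(* Conventions: S_n is realized as 'S_n = {perm 'I_n}, with positions and
   values 0-based: {1,...,n} is shifted to {0,...,n-1}. *)

Definition inv n (pi : 'S_n) : nat :=
  #|[set ij : 'I_n * 'I_n | (ij.1 < ij.2)%N && (pi ij.2 < pi ij.1)%N]|.

Local Open Scope ring_scope.

Definition Zmallows (R : realFieldType) (q : R) n : R :=
  \sum_(s : 'S_n) q ^+ inv s.
Definition mu (R : realFieldType) (q : R) n (pi : 'S_n) : R :=
  q ^+ inv pi / Zmallows q n.

(* Given the sequence of last values
   cs = [:: c_1; ...; c_n] (c_m = p_m(m) - 1), the sequence of values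
   [:: p_n(1)-1; ...; p_n(n)-1] is obtained by iterating the insertion step:
   old values v with v < c (i.e. p_{m-1}(i) < p_m(m)) are kept, the others
   are incremented, and c is appended. *)
Definition mallows_step (acc : seq nat) (c : nat) : seq nat :=
  rcons [seq (if (v < c)%N then v else v.+1) | v <- acc] c.
Definition mallows_seq (cs : seq nat) : seq nat := foldl mallows_step [::] cs.

(* Joint law of the independent choices (p_m(m))_{m <= n}: the choice at
   step m+1 (0-based index m : 'I_n) takes the 0-based value j in {0..m}
   with probability q^j / (1 + q + ... + q^m); choice functions with some
   value j > m get weight 0. *)
Definition choice_weight (R : realFieldType) (q : R) n (c : {ffun 'I_n -> 'I_n}) : R :=
  \prod_(m : 'I_n)
     (if (c m <= m)%N then q ^+ (c m) / \sum_(k < m.+1) q ^+ k else 0).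

Definition mallows_law (R : realFieldType) (q : R) n (sigma : 'S_n) : R :=
  \sum_(c : {ffun 'I_n -> 'I_n})
     choice_weight q c *
     (mallows_seq [seq val (c m) | m <- enum 'I_n]
        == [seq val (sigma i) | i <- enum 'I_n])%:R.

From Pilot Require Import Defs.
From mathcomp Require Import all_boot all_order all_fingroup all_algebra.
From mathcomp Require Import zify.
Import Order.TTheory GRing.Theory Num.Theory.

(* The insertion steps of the q-Mallows process invert the Lehmer code
   s |-> (c_m)_m, c_m = #{j < m | s_j < s_m}: p_n = s exactly when the
   choices (p_m(m) - 1)_m are the code of s, an event of probability
   q^(sum_m c_m) / prod_m [m+1]_q.  Since sum_m c_m counts the
   non-inversions of s, i.e. the inversions of s o rev, the law of p_n o rev
   is proportional to q^inv; summing it over S_n identifies prod_m [m+1]_q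
   with Z_{n,q}.  The four statements then follow because inv is invariant
   under inversion and under conjugation by the reversal rev. *)

Definition lehmer_entry (s : seq nat) (m : nat) : nat :=
  \sum_(j < m) (nth 0 s j < nth 0 s m).

Definition lehmer (s : seq nat) : seq nat := mkseq (lehmer_entry s) (size s).

Definition is_perm_seq (s : seq nat) : bool :=
  uniq s && all (fun v => v < size s) s.

Lemma lehmer_entry_le s m : lehmer_entry s m <= m.
Proof.
rewrite -[leqRHS]card_ord -sum1_card; apply: leq_sum => j _; exact: leq_b1.
Qed.

Lemma count_lt_perm_seq s c :
  is_perm_seq s -> c <= size s -> count (fun v => v < c) s = c.
Proof.
move=> /andP[s_uniq /allP s_lt] c_le.
have /seq.permP -> : perm_eq s (iota 0 (size s)).
  have s_sub : {subset s <= iota 0 (size s)} by move=> v /s_lt; rewrite mem_iota.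
  have [_ eq_s] := uniq_min_size s_uniq s_sub (eq_leq (size_iota 0 (size s))).
  by apply: uniq_perm; rewrite ?iota_uniq.
rewrite -(subnKC c_le) iotaD count_cat add0n.
rewrite (@eq_in_count _ _ predT (iota 0 c)) => [|v]; last by rewrite mem_iota.
rewrite (@eq_in_count _ _ pred0 (iota c _)) => [|v]; last first.
  by rewrite mem_iota => /andP[c_le_v _] /=; rewrite ltnNge c_le_v.
by rewrite count_predT count_pred0 size_iota addn0.
Qed.

Lemma sum_nth_count (p : pred nat) s :
  \sum_(j < size s) p (nth 0 s j) = count p s.
Proof. by elim: s => [|x s IH]; rewrite ?big_ord0 // big_ord_recl IH. Qed.

Lemma lehmer_rcons s x :
  lehmer (rcons s x) = rcons (lehmer s) (count (fun v => v < x) s).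
Proof.
rewrite /lehmer size_rcons mkseqS -sum_nth_count; congr rcons; last first.
  by apply: eq_bigr => j _; rewrite !nth_rcons ltn_ord ltnn eqxx.
apply/eq_in_map => m; rewrite mem_iota => /andP[_ m_lt].
apply: eq_bigr => j _.
by rewrite !nth_rcons m_lt (ltn_trans (ltn_ord j) m_lt).
Qed.

Lemma lehmer_map (h : nat -> nat) s :
  {in s &, {mono h : v w / v < w}} -> lehmer (map h s) = lehmer s.
Proof.
move=> h_mono; rewrite /lehmer size_map; apply/eq_in_map => m.
rewrite mem_iota => /andP[_ m_lt]; apply: eq_bigr => j _.
have j_lt := ltn_trans (ltn_ord j) m_lt.
by rewrite !(nth_map 0) // h_mono ?mem_nth.
Qed.

(** * Insertion: the q-Mallows process as the inverse of the Lehmer code *)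

Lemma ltn_bump2 h i j : (bump h i < bump h j) = (i < j).
Proof. by rewrite !ltnNge leq_bump2. Qed.

Lemma mallows_seq_rcons cs c :
  mallows_seq (rcons cs c) = rcons (map (bump c) (mallows_seq cs)) c.
Proof.
rewrite /mallows_seq foldl_rcons; congr rcons; apply: eq_map => v.
by rewrite /bump; case: ltnP.
Qed.

Lemma size_mallows_seq cs : size (mallows_seq cs) = size cs.
Proof.
by elim/last_ind: cs => [|cs c IH]; rewrite // mallows_seq_rcons !size_rcons size_map IH.
Qed.

Definition lehmer_bounded (cs : seq nat) : Prop :=
  forall m, m < size cs -> nth 0 cs m <= m.

Lemma lehmer_bounded_rcons cs c :
  lehmer_bounded (rcons cs c) -> lehmer_bounded cs /\ c <= size cs.
Proof.
move=> cs_le; split=> [m m_lt|].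
  by have := cs_le m; rewrite size_rcons nth_rcons m_lt; apply; exact: ltnW.
by have := cs_le (size cs); rewrite nth_rcons size_rcons ltnn eqxx; apply.
Qed.

Lemma mallows_seqK cs :
  lehmer_bounded cs -> is_perm_seq (mallows_seq cs) /\ lehmer (mallows_seq cs) = cs.
Proof.
elim/last_ind: cs => [//|cs c IH] /lehmer_bounded_rcons[/IH[s_perm s_code] c_le].
have s_size := size_mallows_seq cs.
rewrite mallows_seq_rcons; split.
  move: s_perm => /andP[s_uniq /allP s_lt].
  rewrite /is_perm_seq rcons_uniq (map_inj_uniq (can_inj (bumpK c))) s_uniq andbT.
  rewrite size_rcons size_map all_rcons ltnS s_size c_le /=; apply/andP; split.
    by apply/mapP => -[v _ /eqP]; rewrite (negbTE (neq_bump c v)).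
  apply/allP => _ /mapP[v /s_lt v_lt ->]; move: v_lt.
  by rewrite s_size /bump; case: (c <= v) => /=; lia.
rewrite lehmer_rcons lehmer_map ?s_code => [|v w _ _]; last exact: ltn_bump2.
rewrite count_map (eq_count (a2 := fun v => v < c)) => [|v]; last first.
  by rewrite /= /bump; case: (leqP c v) => c_v /=; lia.
by rewrite count_lt_perm_seq // s_size.
Qed.

(* Deleting the last value x of a permutation sequence and closing the gap
   with [unbump x] yields a shorter permutation sequence with the same code. *)
Lemma lehmerK s : is_perm_seq s -> mallows_seq (lehmer s) = s.
Proof.
have [k] := ubnP (size s); elim: k s => // k IH s.
case/lastP: s => [//|s x]; rewrite size_rcons ltnS => s_lt_k s_perm.
have x_count : count (fun v => v < x) s = x.
  have x_le : x <= size (rcons s x).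
    by move: s_perm => /andP[_ /allP/(_ x)]; rewrite mem_rcons mem_head => /(_ isT)/ltnW.
  by have := count_lt_perm_seq _ _ s_perm x_le; rewrite -cats1 count_cat /= ltnn !addn0.
move: s_perm => /andP[]; rewrite rcons_uniq size_rcons => /andP[x_notin s_uniq] /allP s_lt.
have neq_x : {in s, forall v, v != x} by move=> v v_s; apply: contraNneq x_notin => <-.
have unbumpK_s : {in s, cancel (unbump x) (bump x)}.
  by move=> v v_s; rewrite unbumpK // inE neq_x.
have unbump_perm : is_perm_seq (map (unbump x) s).
  rewrite /is_perm_seq size_map map_inj_in_uniq ?s_uniq; last first.
    by move=> v w v_s w_s /(congr1 (bump x)); rewrite !unbumpK_s.
  apply/allP => _ /mapP[v v_s ->].
  have := s_lt v; rewrite mem_rcons inE v_s orbT => /(_ isT).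
  have := s_lt x; rewrite mem_rcons mem_head => /(_ isT).
  by move: (neq_x v v_s); rewrite /unbump; case: (ltnP x v) => /= x_v /eqP; lia.
have unbump_code : lehmer (map (unbump x) s) = lehmer s.
  by apply: lehmer_map => v w v_s w_s; rewrite -(ltn_bump2 x) !unbumpK_s.
rewrite lehmer_rcons x_count mallows_seq_rcons -unbump_code IH ?size_map //.
by rewrite -map_comp map_id_in.
Qed.

Section OrdinalValues.
Context {n : nat}.

Definition ord_vals (f : 'I_n -> 'I_n) : seq nat := [seq val (f i) | i <- enum 'I_n].

Lemma size_ord_vals f : size (ord_vals f) = n.
Proof. by rewrite size_map size_enum_ord. Qed.

Lemma nth_ord_vals f (i : 'I_n) : nth 0 (ord_vals f) i = f i.
Proof. by rewrite (nth_map i) ?size_enum_ord // nth_ord_enum. Qed.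

Lemma ord_vals_inj f g : ord_vals f = ord_vals g -> f =1 g.
Proof. by move=> fg i; apply: val_inj; rewrite /= -!nth_ord_vals fg. Qed.

Lemma eq_ord_vals_perm (s t : 'S_n) : (ord_vals s == ord_vals t) = (s == t).
Proof. by apply/eqP/eqP => [/ord_vals_inj/permP | ->]. Qed.

Lemma perm_ord_vals (s : 'S_n) : is_perm_seq (ord_vals s).
Proof.
rewrite /is_perm_seq size_ord_vals map_inj_uniq ?enum_uniq /= => [|i j /val_inj/perm_inj //].
by apply/allP => _ /mapP[i _ ->]; exact: ltn_ord.
Qed.

Lemma ord_vals_perm t : is_perm_seq t -> size t = n -> exists s : 'S_n, t = ord_vals s.
Proof.
move=> /andP[t_uniq /allP t_lt] t_size.
have nth_lt (i : 'I_n) : nth 0 t i < n.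
  by rewrite -[n in _ < n]t_size t_lt ?mem_nth ?t_size.
pose f (i : 'I_n) : 'I_n := Ordinal (nth_lt i).
have f_inj : injective f.
  move=> i j /(congr1 val) /= /eqP; rewrite nth_uniq ?t_size //.
  by move=> /eqP /val_inj.
exists (perm f_inj); apply: (@eq_from_nth _ 0); rewrite ?size_ord_vals ?t_size //.
by move=> k k_lt; rewrite (nth_ord_vals _ (Ordinal k_lt)) permE.
Qed.

Lemma lehmer_bounded_ord_vals (c : 'I_n -> 'I_n) :
  (forall m, c m <= m) -> lehmer_bounded (ord_vals c).
Proof.
by move=> c_le m; rewrite size_ord_vals => m_lt; rewrite (nth_ord_vals _ (Ordinal m_lt)).
Qed.

Definition lehmer_perm (s : 'S_n) : {ffun 'I_n -> 'I_n} :=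
  [ffun m : 'I_n => Ordinal (leq_ltn_trans (lehmer_entry_le (ord_vals s) m) (ltn_ord m))].

Lemma lehmer_perm_le s m : lehmer_perm s m <= m.
Proof. by rewrite ffunE lehmer_entry_le. Qed.

Lemma ord_vals_lehmer_perm s : ord_vals (lehmer_perm s) = lehmer (ord_vals s).
Proof.
rewrite /lehmer size_ord_vals /mkseq -val_enum_ord -map_comp.
by apply: eq_map => m; rewrite /= ffunE.
Qed.

Lemma mallows_seq_lehmer_perm s : mallows_seq (ord_vals (lehmer_perm s)) = ord_vals s.
Proof. by rewrite ord_vals_lehmer_perm lehmerK ?perm_ord_vals. Qed.

Lemma mallows_seq_ord_vals (c : {ffun 'I_n -> 'I_n}) :
  (forall m, c m <= m) -> exists s : 'S_n, mallows_seq (ord_vals c) = ord_vals s.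
Proof.
move=> /lehmer_bounded_ord_vals/mallows_seqK[c_perm _].
by apply: ord_vals_perm; rewrite // size_mallows_seq size_ord_vals.
Qed.

Lemma lehmer_perm_unique (c : {ffun 'I_n -> 'I_n}) (s : 'S_n) :
  (forall m, c m <= m) -> mallows_seq (ord_vals c) = ord_vals s -> c = lehmer_perm s.
Proof.
move=> /lehmer_bounded_ord_vals/mallows_seqK[_ c_code] c_s.
by apply/ffunP/ord_vals_inj; rewrite ord_vals_lehmer_perm -c_s.
Qed.

End OrdinalValues.

Lemma card_eq_inj (T : finType) (f : T -> T) (A B : {set T}) :
  injective f -> (forall x, (f x \in A) = (x \in B)) -> #|A| = #|B|.
Proof.
by move=> f_inj fAB; rewrite -(card_preimset _ f_inj); apply: eq_card => x; rewrite !inE fAB.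
Qed.

Section Inversions.
Context {n : nat}.

Definition rev_perm : 'S_n := perm (@rev_ord_inj n).

Lemma rev_permE i : rev_perm i = rev_ord i.
Proof. exact: permE. Qed.

Lemma rev_perm_invol : (rev_perm * rev_perm = 1)%g.
Proof. by apply/permP => i; rewrite permM !rev_permE perm1 rev_ordK. Qed.

Lemma rev_permV : (rev_perm^-1 = rev_perm)%g.
Proof. by apply/eqP; rewrite eq_invg_mul rev_perm_invol. Qed.

Lemma ltn_rev_ord (i j : 'I_n) : (rev_ord i < rev_ord j) = (j < i).
Proof. by rewrite /= ltn_sub2lE // ltn_ord. Qed.

Lemma inv_invg (s : 'S_n) : Defs.inv (s^-1)%g = Defs.inv s.
Proof.
apply: (@card_eq_inj _ (fun p => (s p.2, s p.1))).
  by move=> [i j] [i' j'] /= [/perm_inj-> /perm_inj->].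
by move=> [i j]; rewrite !inE /= !permK andbC.
Qed.

Lemma inv_conj_rev (s : 'S_n) : Defs.inv (rev_perm * s * rev_perm)%g = Defs.inv s.
Proof.
apply: (@card_eq_inj _ (fun p => (rev_perm p.2, rev_perm p.1))).
  by move=> [i j] [i' j'] /= [/perm_inj-> /perm_inj->].
by move=> [i j]; rewrite !inE /= !permM !rev_permE !rev_ordK !ltn_rev_ord.
Qed.

Lemma lehmer_permE (s : 'S_n) m :
  lehmer_perm s m = \sum_(j : 'I_n | (j < m) && (s j < s m)) 1 :> nat.
Proof.
rewrite ffunE /= /lehmer_entry (big_ord_widen n (fun j => nat_of_bool
  (nth 0 (ord_vals s) j < nth 0 (ord_vals s) m))) ?(ltnW (ltn_ord m)) //.
rewrite [LHS]big_mkcond [RHS]big_mkcond /=; apply: eq_bigr => j _.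
by rewrite !nth_ord_vals; case: (j < m); case: (s j < s m).
Qed.

Lemma sum_lehmer_perm (s : 'S_n) : \sum_m lehmer_perm s m = Defs.inv (rev_perm * s)%g.
Proof.
under eq_bigr do rewrite lehmer_permE.
rewrite pair_big_dep /= sum1_card.
transitivity #|[set p : 'I_n * 'I_n | (p.2 < p.1) && (s p.2 < s p.1)]|.
  by apply: eq_card => -[i j]; rewrite inE.
apply/esym/(@card_eq_inj _ (fun p => (rev_perm p.1, rev_perm p.2))).
  by move=> [i j] [i' j'] /= [/perm_inj-> /perm_inj->].
by move=> [i j]; rewrite !inE /= !permM !rev_permE !rev_ordK !ltn_rev_ord.
Qed.

End Inversions.

Local Open Scope ring_scope.

Section MallowsLaw.
Variables (R : realFieldType) (q : R) (n : nat).

Definition choice_mass (c : {ffun 'I_n -> 'I_n}) : R :=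
  \prod_(m : 'I_n) (if (c m <= m)%N then q ^+ c m else 0).

Definition qfact : R := \prod_(m : 'I_n) \sum_(k < m.+1) q ^+ k.

Definition mallows_mass (s : 'S_n) : R :=
  \sum_c choice_mass c * (mallows_seq (ord_vals c) == ord_vals s)%:R.

Lemma choice_mass_eq0 (c : {ffun 'I_n -> 'I_n}) :
  ~~ [forall m, (c m <= m)%N] -> choice_mass c = 0.
Proof. by case/forallPn => m c_gt; rewrite /choice_mass (bigD1 m) //= ifN // mul0r. Qed.

Lemma sum_choice_mass : \sum_c choice_mass c = qfact.
Proof.
rewrite /qfact (eq_bigr (fun m : 'I_n => \sum_(k : 'I_n) if (k <= m)%N then q ^+ k else 0)).
  by rewrite bigA_distr_bigA.
by move=> m _; rewrite (big_ord_widen n (fun k => q ^+ k)) ?ltn_ord // big_mkcond.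
Qed.

Lemma mallows_lawE_mass (s : 'S_n) : mallows_law q s = mallows_mass s / qfact.
Proof.
rewrite /mallows_law /mallows_mass big_distrl /=; apply: eq_bigr => c _.
rewrite mulrAC; congr (_ * _).
rewrite /choice_weight /choice_mass /qfact -prodf_div; apply: eq_bigr => m _.
by case: ifP; rewrite ?mul0r.
Qed.

Lemma mallows_massE (s : 'S_n) : mallows_mass s = q ^+ Defs.inv (rev_perm * s)%g.
Proof.
rewrite /mallows_mass (bigD1 (lehmer_perm s)) //= mallows_seq_lehmer_perm eqxx mulr1.
rewrite big1 ?addr0 => [|c c_neq].
  rewrite -sum_lehmer_perm -prodrXr; apply: eq_bigr => m _.
  by rewrite lehmer_perm_le.
have [/forallP c_le | /choice_mass_eq0->] := boolP [forall m, (c m <= m)%N];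
  last by rewrite mul0r.
case: eqP => [/(lehmer_perm_unique _ _ c_le) c_eq | _]; last by rewrite mulr0.
by rewrite c_eq eqxx in c_neq.
Qed.

Lemma sum_mallows_mass : \sum_s mallows_mass s = qfact.
Proof.
rewrite -sum_choice_mass exchange_big; apply: eq_bigr => c _; rewrite -mulr_sumr.
have [/forallP c_le | /choice_mass_eq0->] := boolP [forall m, (c m <= m)%N];
  last by rewrite mul0r.
have [s0 c_s0] := mallows_seq_ord_vals _ c_le.
rewrite (bigD1 s0) //= c_s0 eqxx big1 ?addr0 ?mulr1 // => s s_neq.
by rewrite eq_ord_vals_perm eq_sym (negbTE s_neq).
Qed.

Lemma Zmallows_qfact : Zmallows q n = qfact.
Proof.
rewrite /Zmallows (reindex_inj (mulgI rev_perm)) -sum_mallows_mass.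
by apply: eq_bigr => s _; rewrite mallows_massE.
Qed.

Lemma mallows_lawE (s : 'S_n) : mallows_law q s = mu q (rev_perm * s)%g.
Proof. by rewrite mallows_lawE_mass mallows_massE /mu Zmallows_qfact. Qed.

Lemma mu_invg (s : 'S_n) : mu q (s^-1)%g = mu q s.
Proof. by rewrite /mu inv_invg. Qed.

Lemma mu_conj_rev (s : 'S_n) : mu q (rev_perm * s * rev_perm)%g = mu q s.
Proof. by rewrite /mu inv_conj_rev. Qed.

End MallowsLaw.

Theorem corollary2p3 (R : realFieldType) (q : R) (hq : 0 < q) (n : nat) (hn : (1 <= n)%N)
    (tau : 'S_n) :
  [/\ \sum_(sigma : 'S_n | [forall i, tau i == sigma (rev_ord i)]) mallows_law q sigma
        = mu q tau,
      \sum_(sigma : 'S_n | [forall i, tau i == rev_ord ((sigma^-1)%g i)]) mallows_law q sigma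
        = mu q tau,
      \sum_(sigma : 'S_n | [forall i, tau i == (sigma^-1)%g (rev_ord i)]) mallows_law q sigma
        = mu q tau
    & \sum_(sigma : 'S_n | [forall i, tau i == rev_ord (sigma i)]) mallows_law q sigma
        = mu q tau].
Proof.
split.
- rewrite (big_pred1 (rev_perm * tau)%g) => [|s].
    by rewrite mallows_lawE mulgA rev_perm_invol mul1g.
  apply/forallP/eqP => [tau_s | -> i]; last by rewrite permM rev_permE rev_ordK.
  by apply/permP => i; rewrite permM rev_permE (eqP (tau_s _)) rev_ordK.
- rewrite (big_pred1 (rev_perm * tau^-1)%g) => [|s].
    by rewrite mallows_lawE mulgA rev_perm_invol mul1g mu_invg.
  apply/forallP/eqP => [tau_s | -> i]; last first.
    by rewrite invMg invgK rev_permV permM rev_permE rev_ordK.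
  apply: invg_inj; rewrite invMg invgK rev_permV.
  by apply/permP => i; rewrite permM rev_permE (eqP (tau_s i)) rev_ordK.
- rewrite (big_pred1 (tau^-1 * rev_perm)%g) => [|s].
    by rewrite mallows_lawE mulgA mu_conj_rev mu_invg.
  apply/forallP/eqP => [tau_s | -> i]; last first.
    by rewrite invMg rev_permV invgK permM rev_permE rev_ordK.
  apply: invg_inj; rewrite invMg invgK rev_permV.
  by apply/permP => i; rewrite permM rev_permE (eqP (tau_s _)) rev_ordK.
- rewrite (big_pred1 (tau * rev_perm)%g) => [|s].
    by rewrite mallows_lawE mulgA mu_conj_rev.
  apply/forallP/eqP => [tau_s | -> i]; last by rewrite permM rev_permE rev_ordK.
  by apply/permP => i; rewrite permM rev_permE (eqP (tau_s i)) rev_ordK.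
Qed.
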